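(* Let $S$ be an additively cancellative, semisubtractive, centrally essential semiring with center $C=C(S)$. The following conditions are equivalent: (1) $S$ is a semiprime semiring; (2) $C$ is a semiprime semiring; (3) $S$ has no non-zero nilpotent elements; (4) $S$ is a commutative semiring without non-zero nilpotent elements.
   Context: A semiring is a set $S$ with two binary operations $+$ and $\cdot$ such that $(S,+)$ is a commutative monoid with neutral element $0$, $(S,\cdot)$ is a monoid with identity $1$, multiplication distributes over addition on both sides, and $0s=s0=0$ for all $s\in S$. The center is $C(S)=\{s\in S: ss'=s's \text{ for all } s'\in S\}$, a subsemiring. $S$ is centrally essential if for every non-zero $x\in S$ there exist non-zero $y,z\in C(S)$ with $xy=z$. $S$ is additively cancellative if $x+z=y+z$ implies $x=y$. $S$ is semisubtractive if for all $a\neq b$ in $S$ there exists $x\in S$ with $a+x=b$ or $b+x=a$. A semiring is semiprime if it has no non-zero nilpotent ideals. *)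

From mathcomp Require Import all_boot all_algebra.
Set Implicit Arguments. Unset Strict Implicit. Unset Printing Implicit Defensive.
Import GRing.Theory.
Local Open Scope ring_scope.

(* A semiring in the sense of the paper (commutative additive monoid,
   multiplicative monoid, two-sided distributivity, absorbing zero) is
   exactly MathComp's [pzSemiRingType] (0 = 1 allowed). *)

Section Semirings.
Variable S : pzSemiRingType.

Definition central (s : S) : Prop := forall s' : S, s * s' = s' * s.

Definition centrally_essential : Prop :=
  forall x : S, x != 0 ->
    exists y z : S, [/\ central y, central z, y != 0, z != 0 & x * y = z].

Definition add_cancellative : Prop :=
  forall x y z : S, x + z = y + z -> x = y.

Definition semisubtractive : Prop :=
  forall a b : S, a != b -> exists x : S, a + x = b \/ b + x = a.

Definition ideal_in (A I : S -> Prop) : Prop :=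
  [/\ forall x, I x -> A x,
      I 0,
      forall x y, I x -> I y -> I (x + y),
      forall a x, A a -> I x -> I (a * x)
    & forall a x, A a -> I x -> I (x * a)].

(* I is nilpotent: I^n = 0 for some n >= 1, i.e. every product of
   n elements of I vanishes (I^n is the set of finite sums of such products) *)
Definition nilpotent_ideal (I : S -> Prop) : Prop :=
  exists n : nat, (0 < n)%N /\
    forall f : 'I_n -> S, (forall i, I (f i)) -> \prod_(i < n) f i = 0.

Definition semiprime_in (A : S -> Prop) : Prop :=
  forall I, ideal_in A I -> nilpotent_ideal I -> forall x, I x -> x = 0.

Definition semiprime : Prop := semiprime_in (fun _ => True).

Definition center_semiprime : Prop := semiprime_in central.

Definition no_nonzero_nilpotents : Prop :=
  forall (x : S) (n : nat), x ^+ n = 0 -> x = 0.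

Definition commutative_semiring : Prop := forall x y : S, x * y = y * x.

End Semirings.

From mathcomp Require Import all_boot all_algebra.

Set Implicit Arguments.
Unset Strict Implicit.
Unset Printing Implicit Defensive.
Import GRing.Theory.
Local Open Scope ring_scope.

(* A nilpotent central element c of a subsemiring A generates the nilpotent
   ideal cA, so semiprimeness of S or of C(S) kills central nilpotents; central
   essentiality transports this to all nilpotents (x^n = 0 and xy = z central
   give z^n = 0). Conversely, a nilpotent ideal of a reduced semiring is 0.
   For commutativity write xs + d = sx, using semisubtractivity. Cancelling
   xsc gives dc = 0 for every central c with xc central, and in a reduced
   centrally essential semiring such elements c detect every d != 0. *)

Section Center.
Variable S : pzSemiRingType.
Implicit Types a b c x : S.

Lemma central0 : central (0 : S).
Proof. by move=> t; rewrite mul0r mulr0. Qed.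

Lemma central1 : central (1 : S).
Proof. by move=> t; rewrite mul1r mulr1. Qed.

Lemma centralD a b : central a -> central b -> central (a + b).
Proof. by move=> Ca Cb t; rewrite mulrDl mulrDr Ca Cb. Qed.

Lemma centralM a b : central a -> central b -> central (a * b).
Proof. by move=> Ca Cb t; rewrite -mulrA Cb mulrA Ca mulrA. Qed.

Lemma reduced_semiprime_in (A : S -> Prop) :
  no_nonzero_nilpotents S -> semiprime_in A.
Proof.
move=> reducedS I _ [n [_ nilI]] x Ix; apply: (reducedS x n).
by rewrite -(card_ord n) -prodr_const; apply: nilI.
Qed.

Section Subsemiring.
Variable A : S -> Prop.
Hypotheses (A0 : A 0) (A1 : A 1).
Hypothesis AD : forall a b, A a -> A b -> A (a + b).
Hypothesis AM : forall a b, A a -> A b -> A (a * b).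

Definition principal_ideal c : S -> Prop := fun t => exists2 a, A a & t = c * a.

Lemma principal_ideal_central c :
  central c -> A c -> ideal_in A (principal_ideal c).
Proof.
move=> Cc Ac; split.
- by move=> _ [a Aa ->]; apply: AM.
- by exists 0; rewrite ?mulr0.
- by move=> _ _ [a Aa ->] [b Ab ->]; exists (a + b); [exact: AD | rewrite mulrDr].
- by move=> b _ Ab [a Aa ->]; exists (b * a); [exact: AM | rewrite mulrA -Cc mulrA].
- by move=> b _ Ab [a Aa ->]; exists (a * b); [exact: AM | rewrite mulrA].
Qed.

Lemma principal_ideal_nilpotent c n :
  central c -> c ^+ n.+1 = 0 -> nilpotent_ideal (principal_ideal c).
Proof.
move=> Cc cn0; exists n.+1; split=> // f /fin_all_exists2[a _ def_f].
rewrite (eq_bigr _ (fun i _ => def_f i)) prodrMl_comm; last by move=> i _; apply: Cc.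
by rewrite card_ord cn0 mul0r.
Qed.

Lemma semiprime_in_central_nilpotent c n :
  semiprime_in A -> central c -> A c -> c ^+ n = 0 -> c = 0.
Proof.
move=> primeA Cc Ac; case: n => [|n] cn0.
  by rewrite -(mulr1 c) -(expr0 c) cn0 mulr0.
apply: (primeA (principal_ideal c)).
- exact: principal_ideal_central.
- exact: principal_ideal_nilpotent cn0.
- by exists 1; rewrite ?mulr1.
Qed.

End Subsemiring.

Hypothesis essS : centrally_essential S.

Lemma reduced_from_central :
  (forall c n, central c -> c ^+ n = 0 -> c = 0) -> no_nonzero_nilpotents S.
Proof.
move=> reducedC x n xn0; have [// | x_neq0] := eqVneq x 0.
have [y [z [Cy Cz _ z_neq0 def_z]]] := essS x_neq0.
suff z0 : z = 0 by rewrite z0 eqxx in z_neq0.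
apply: (reducedC z n Cz).
by rewrite -def_z exprMn_comm ?xn0 ?mul0r //; apply: Cy.
Qed.

Hypothesis reducedS : no_nonzero_nilpotents S.

Lemma central_detects_nonzero x d : d != 0 ->
  exists c, [/\ central c, central (x * c) & d * c != 0].
Proof.
move=> d_neq0; have [y [z [Cy Cz _ z_neq0 def_z]]] := essS d_neq0.
have zz_neq0 : z * z != 0 by apply: contra z_neq0 => /eqP/(@reducedS z 2)->.
suff [c [Cc Cxc zc_neq0]] : exists c, [/\ central c, central (x * c) & z * c != 0].
  exists (y * c); split; [exact: centralM | | by rewrite mulrA def_z].
  by rewrite mulrA -(Cy x) -mulrA; apply: centralM.
have [xz0 | xz_neq0] := eqVneq (x * z) 0.
  by exists z; split=> //; rewrite xz0; apply: central0.
have [u [w [Cu Cw _ w_neq0 def_w]]] := essS xz_neq0.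
exists (z * u); split; [exact: centralM | by rewrite mulrA def_w |].
apply: contra w_neq0 => /eqP zzu0.
have zu0 : z * u = 0.
  by apply: (@reducedS _ 2); rewrite expr2 -mulrA (Cu (z * u)) mulrA zzu0 mul0r.
by rewrite -def_w -mulrA zu0 mulr0.
Qed.

Hypothesis cancelS : add_cancellative S.

Lemma commutator_defect_eq0 x s d : x * s + d = s * x -> d = 0.
Proof.
move=> def_sx; have [// | d_neq0] := eqVneq d 0.
have [c [Cc Cxc dc_neq0]] := central_detects_nonzero x d_neq0.
suff dc0 : d * c = 0 by rewrite dc0 eqxx in dc_neq0.
apply: (@cancelS _ _ (x * s * c)).
by rewrite add0r addrC -mulrDl def_sx -!mulrA -Cxc -mulrA (Cc s).
Qed.

Hypothesis subS : semisubtractive S.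

Lemma reduced_commutative : commutative_semiring S.
Proof.
move=> x s; have [// | ne] := eqVneq (x * s) (s * x).
have [d [def_sx | def_xs]] := subS ne.
  by rewrite -def_sx (commutator_defect_eq0 def_sx) addr0.
by rewrite -def_xs (commutator_defect_eq0 def_xs) addr0.
Qed.

End Center.

Theorem proposition2p1 (S : pzSemiRingType) :
  add_cancellative S -> semisubtractive S -> centrally_essential S ->
  [/\ (semiprime S <-> center_semiprime S),
      (center_semiprime S <-> no_nonzero_nilpotents S)
    & (no_nonzero_nilpotents S <->
         commutative_semiring S /\ no_nonzero_nilpotents S)].
Proof.
move=> cancelS subS essS.
have prime_reduced : semiprime S -> no_nonzero_nilpotents S.
  move=> primeS; apply: reduced_from_central => // c n Cc.
  exact: (semiprime_in_central_nilpotent (A := fun _ => True)).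
have center_prime_reduced : center_semiprime S -> no_nonzero_nilpotents S.
  move=> primeC; apply: reduced_from_central => // c n Cc.
  exact: (semiprime_in_central_nilpotent (@central0 S) (@central1 S)
            (@centralD S) (@centralM S)).
split; split.
- by move/prime_reduced; apply: reduced_semiprime_in.
- by move/center_prime_reduced; apply: reduced_semiprime_in.
- exact: center_prime_reduced.
- exact: reduced_semiprime_in.
- by move=> reducedS; split=> //; apply: reduced_commutative.
- by case.
Qed.
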